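(* Let $m\ge3$ and let $\lambda_1$ be a $\mathbb{Z}_2$-characteristic map over $P_m$ whose $\mathbf b\mathbf c$-pieces are $s_1,\dots,s_k$ (so that, cyclically, $\lambda_1=\mathbf a s_1\mathbf a s_2\mathbf a\cdots\mathbf a s_k$ with $k=|\lambda_1^{-1}(\mathbf a)|$). Let $p\neq q$ be vertices with $\lambda_1(p)=\lambda_1(q)=\mathbf a$. For each $i$ let $\phi_i,\psi_i$ each be either the identity or the inversion, and let $\lambda_2=\mathbf a\phi_1(s_1)\mathbf a\cdots\mathbf a\phi_k(s_k)$, $\lambda_3=\mathbf a\psi_1(s_1)\mathbf a\cdots\mathbf a\psi_k(s_k)$, and $\lambda_4=\mathbf a\psi_1(\phi_1(s_1))\mathbf a\cdots\mathbf a\psi_k(\phi_k(s_k))$. Then there exists a $\mathbb{Z}_2$-characteristic map $\Lambda$ over $\mathrm{wed}_{p,q}P_m$ with $\operatorname{proj}_{\{p_2,q_2\}}\Lambda\simeq\lambda_1$, $\operatorname{proj}_{\{p_1,q_2\}}\Lambda\simeq\lambda_2$, $\operatorname{proj}_{\{p_2,q_1\}}\Lambda\simeq\lambda_3$, $\operatorname{proj}_{\{p_1,q_1\}}\Lambda\simeq\lambda_4$; i.e. the edges $\{\lambda_1,\lambda_2,p\}$ and $\{\lambda_1,\lambda_3,q\}$ span a realizable square with fourth node $\lambda_4$. (Every D-J class $p$-adjacent (resp. $q$-adjacent) to $\lambda_1$ has a representative of the form of $\lambda_2$ (resp. $\lambda_3$), so any two such edges span a realizable square.)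
   Context: $P_m$: simplicial complex on $[m]$ with facets $\{i,i+1\}$ mod $m$. $\mathbf a=(1,0)^T,\mathbf b=(0,1)^T,\mathbf c=(1,1)^T$; a $\mathbb{Z}_2$-characteristic map over $P_m$ is a cyclic word $\lambda\colon[m]\to\{\mathbf a,\mathbf b,\mathbf c\}$ with cyclically consecutive letters distinct; D-J equivalence ($\simeq$) is composition with $GL(2,\mathbb{Z}_2)$ (permutations of letters). $\mathbf b\mathbf c$-pieces: restrictions of $\lambda$ to maximal cyclic intervals of $[m]\setminus\lambda^{-1}(\mathbf a)$; inversion swaps $\mathbf b,\mathbf c$ on a piece. For a simplicial complex $K$ and vertices $p\ne q$, $\mathrm{wed}_{p,q}K$ has vertex set $(V\setminus\{p,q\})\cup\{p_1,p_2,q_1,q_2\}$ and minimal non-faces obtained from those of $K$ by replacing $p$ by $p_1,p_2$ and $q$ by $q_1,q_2$ whenever they occur. A $\mathbb{Z}_2$-characteristic map over an $(n-1)$-dimensional complex is a map to $\mathbb{Z}_2^n$ sending vertices of each face to linearly independent vectors. For a face $\sigma$, $\operatorname{proj}_\sigma\Lambda(w)=[\Lambda(w)]\in\mathbb{Z}_2^n/\langle\Lambda(v):v\in\sigma\rangle$ on $\operatorname{lk}\sigma$. The link of $\{p_i,q_j\}$ in $\mathrm{wed}_{p,q}P_m$ is identified with $P_m$ via $p_{3-i}\mapsto p$, $q_{3-j}\mapsto q$, identity elsewhere. *)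

From HB Require Import structures.
From mathcomp Require Import all_boot all_order all_algebra.
Set Implicit Arguments. Unset Strict Implicit. Unset Printing Implicit Defensive.
Import GRing.Theory.
Local Open Scope ring_scope.

Inductive letter := La | Lb | Lc.

Definition vecOf (l : letter) : 'rV['F_2]_2 :=
  match l with
  | La => \row_(j < 2) (j == 0 :> nat)%:R
  | Lb => \row_(j < 2) (j == 1 :> nat)%:R
  | Lc => \row_(j < 2) 1
  end.

(** Inversion of a bc-piece: swap b and c (a is fixed). *)
Definition inv_letter (l : letter) : letter :=
  match l with La => La | Lb => Lc | Lc => Lb end.

Definition Pm_char (m : nat) (lam : 'I_m -> letter) : Prop :=
  forall i : 'I_m, lam i <> lam (ordS i).

(** A choice of identity/inversion for each bc-piece of lam: a boolean function
    (true = inversion) constant on each maximal cyclic interval avoiding a. *)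
Definition piece_choice (m : nat) (lam : 'I_m -> letter) (phi : 'I_m -> bool) : Prop :=
  forall i : 'I_m, lam i <> La -> lam (ordS i) <> La -> phi i = phi (ordS i).

Definition apply_choice (m : nat) (lam : 'I_m -> letter) (phi : 'I_m -> bool)
  : 'I_m -> letter :=
  fun i => if phi i then inv_letter (lam i) else lam i.

Definition Pm_face (m : nat) (S : {set 'I_m}) : bool :=
  (#|S| <= 1)%N || [exists i : 'I_m, S == [set i; ordS i]].

Definition Pm_mnf (m : nat) (S : {set 'I_m}) : bool :=
  ~~ Pm_face S && [forall x in S, Pm_face (S :\ x)].

(** Vertex set of wed_{p,q} P_m: pairs (v,b); for v = p,q both b = false (index 1)
    and b = true (index 2) occur; other v only with b = false. *)
Definition wV (m : nat) (p q : 'I_m) : predArgType :=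
  {x : 'I_m * bool | (x.1 == p) || (x.1 == q) || ~~ x.2}.

Lemma wVp_proof (m : nat) (p q : 'I_m) (b : bool) :
  ((p, b).1 == p) || ((p, b).1 == q) || ~~ (p, b).2.
Proof. by rewrite /= eqxx. Qed.

Lemma wVq_proof (m : nat) (p q : 'I_m) (b : bool) :
  ((q, b).1 == p) || ((q, b).1 == q) || ~~ (q, b).2.
Proof. by rewrite /= eqxx orbT. Qed.

(** p_1 = vp false, p_2 = vp true; similarly for q. *)
Definition vp (m : nat) (p q : 'I_m) (b : bool) : wV p q := exist _ (p, b) (wVp_proof p q b).
Definition vq (m : nat) (p q : 'I_m) (b : bool) : wV p q := exist _ (q, b) (wVq_proof p q b).

(** The image in the wedge of a minimal non-face N of P_m:
    p replaced by p_1,p_2 and q by q_1,q_2. *)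
Definition wexpand (m : nat) (p q : 'I_m) (N : {set 'I_m}) : {set wV p q} :=
  [set w : wV p q | (sval w).1 \in N].

Definition wed_face (m : nat) (p q : 'I_m) (s : {set wV p q}) : bool :=
  ~~ [exists N : {set 'I_m}, Pm_mnf N && (wexpand p q N \subset s)].

(** Z_2-characteristic map over wed_{p,q} P_m (dimension 3, so into Z_2^4). *)
Definition wed_char (m : nat) (p q : 'I_m) (Lam : wV p q -> 'rV['F_2]_4) : Prop :=
  forall s : {set wV p q}, wed_face s -> free [seq Lam v | v in s].

Definition link_vertex (m : nat) (p q : 'I_m) (s : {set wV p q}) (w : wV p q) : bool :=
  (w \notin s) && wed_face (w |: s).

(** Identification of the link of {p_i,q_j} with P_m: p_{3-i} |-> p, q_{3-j} |-> q,
    identity elsewhere, i.e. first projection. *)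
Definition wident (m : nat) (p q : 'I_m) (w : wV p q) : 'I_m := (sval w).1.

(** proj_s Lam is D-J equivalent to lam: there is a linear map Z_2^4 -> Z_2^2 whose
    kernel is exactly <Lam(v) : v in s> (i.e. an isomorphism from the quotient
    Z_2^4 / <Lam(v) : v in s> onto Z_2^2) sending [Lam w] to lam(w) on the link. *)
Definition proj_DJ (m : nat) (p q : 'I_m) (Lam : wV p q -> 'rV['F_2]_4)
  (s : {set wV p q}) (lam : 'I_m -> letter) : Prop :=
  exists f : 'Hom('rV['F_2]_4, 'rV['F_2]_2),
    lker f = <<[seq Lam v | v in s]>>%VS /\
    forall w : wV p q, link_vertex s w -> f (Lam w) = vecOf (lam (wident w)).

From HB Require Import structures.
From mathcomp Require Import all_boot all_order all_algebra.
Set Implicit Arguments. Unset Strict Implicit. Unset Printing Implicit Defensive.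
Import GRing.Theory.
Local Open Scope ring_scope.

(* Write Z_2^4 = Z_2^2 + Z_2^2 with basis e1..e4. A vertex v other than p, q is sent to
   (lam1 v, phi v [lam1 v <> a], psi v [lam1 v <> a]); p_i is sent to e3 and q_j to e4, plus
   e1 when i = 1 (resp. j = 1). Quotienting by the images of p_i and q_j sends e3 to 0 or to
   e1 = a, and e4 likewise, so it adds a, i.e. swaps b and c, exactly on the letters inverted by
   phi (when p_1 is in the face) and by psi (when q_1 is): this gives the four prescribed maps.
   For a face s, take the corner {p_i, q_j} with i = 2 iff p_2 is in s (and j likewise): the
   vertices of s outside it lie over pairwise distinct vertices forming a face of P_m, so their
   images in that quotient are distinct nonzero vectors of Z_2^2, while the rest of s lies in
   the kernel and is independent; rank-nullity gives independence. *)

Section FreeByProjection.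
Variables (K : fieldType) (U V : vectType K) (f : 'Hom(U, V)).
Variables (T : finType) (L : T -> U).

Lemma free_split_ker (s C : {set T}) :
  {in s :&: C, forall v, f (L v) = 0} ->
  free [seq L v | v in s :&: C] -> free [seq f (L v) | v in s :\: C] ->
  free [seq L v | v in s].
Proof.
move=> kerC freeC freeD; rewrite /free size_map -cardE eqn_leq.
rewrite -[X in (_ <= X)%N](size_image L) dim_span /=.
set S := <<[seq L v | v in s]>>%VS.
have inS v : v \in s -> L v \in S by move=> sv; rewrite memv_span ?image_f.
rewrite -(cardsID C) -(limg_ker_dim f S) leq_add //.
  move: freeC; rewrite /free size_image => /eqP <-; apply: dimvS.
  apply/span_subvP => _ /imageP[v vsC ->]; rewrite memv_cap memv_ker kerC // eqxx andbT.
  by apply: inS; case/setIP: vsC.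
move: freeD; rewrite /free size_image => /eqP <-; apply: dimvS.
apply/span_subvP => _ /imageP[v vsD ->]; apply: memv_img; apply: inS.
by case/setDP: vsD.
Qed.

Lemma free_of_image (s : {set T}) :
  free [seq f (L v) | v in s] -> free [seq L v | v in s].
Proof.
move=> freeI; apply: (@free_split_ker s set0); rewrite ?setD0 // setI0.
  by move=> v; rewrite inE.
by rewrite /image_mem enum_set0 nil_free.
Qed.
End FreeByProjection.

Lemma F2_cases (k : 'F_2) : k = 0 \/ k = 1.
Proof. by case: k => [[|[|//]] ?]; [left | right]; apply: val_inj. Qed.

Lemma free_F2_small (vT : vectType 'F_2) (X : seq vT) :
  uniq X -> 0 \notin X -> (size X <= 2)%N -> free X.
Proof.
case: X => [|u [|v [|//]]]; rewrite ?nil_free //= !inE ?negb_or.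
  by rewrite seq1_free eq_sym.
rewrite !andbT => uv /andP[u0 v0] _.
rewrite free_cons span_seq1 seq1_free eq_sym v0 andbT.
apply/vlineP => -[k ukv]; move: uv u0; rewrite ukv.
by case: (F2_cases k) => ->; rewrite ?scale0r ?scale1r ?eqxx.
Qed.

Definition bits2 (a b : bool) : 'rV['F_2]_2 := \row_(j < 2) (nth false [:: a; b] j)%:R.
Definition bits4 (a b c d : bool) : 'rV['F_2]_4 :=
  \row_(j < 4) (nth false [:: a; b; c; d] j)%:R.

Lemma natr_addb (a b : bool) : (a (+) b)%:R = a%:R + b%:R :> 'F_2.
Proof. by case: a; case: b; rewrite ?addr0 ?add0r //; apply: val_inj. Qed.

Lemma natr_andb (a b : bool) : (a && b)%:R = a%:R * b%:R :> 'F_2.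
Proof. by case: a; case: b; rewrite ?mulr0 ?mul0r ?mulr1. Qed.

Lemma natr_bool_inj : injective (fun b : bool => b%:R : 'F_2).
Proof. by case; case=> // /eqP; rewrite ?oner_eq0 // eq_sym oner_eq0. Qed.

Lemma bits2D a b a' b' : bits2 a b + bits2 a' b' = bits2 (a (+) a') (b (+) b').
Proof. by apply/rowP => -[[|[|//]] ?]; rewrite !mxE natr_addb. Qed.

Lemma bits2Z (k a b : bool) : k%:R *: bits2 a b = bits2 (k && a) (k && b).
Proof. by apply/rowP => -[[|[|//]] ?]; rewrite !mxE natr_andb. Qed.

Lemma bits2_inj a b a' b' : bits2 a b = bits2 a' b' -> a = a' /\ b = b'.
Proof.
move=> e; split; apply: natr_bool_inj.
  by have := congr1 (fun x : 'rV_2 => x 0 0) e; rewrite !mxE.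
by have := congr1 (fun x : 'rV_2 => x 0 1) e; rewrite !mxE.
Qed.

Lemma bits2_0 : bits2 false false = 0.
Proof. by apply/rowP => -[[|[|//]] ?]; rewrite !mxE. Qed.

Lemma bits4D a b c d a' b' c' d' :
  bits4 a b c d + bits4 a' b' c' d' = bits4 (a (+) a') (b (+) b') (c (+) c') (d (+) d').
Proof. by apply/rowP => -[[|[|[|[|//]]]] ?]; rewrite !mxE natr_addb. Qed.

Lemma bits4Z (k a b c d : bool) :
  k%:R *: bits4 a b c d = bits4 (k && a) (k && b) (k && c) (k && d).
Proof. by apply/rowP => -[[|[|[|[|//]]]] ?]; rewrite !mxE natr_andb. Qed.

Lemma bits4P (x : 'rV['F_2]_4) : exists a b c d, x = bits4 a b c d.
Proof.
have bit (j : 'I_4) : x 0 j = (x 0 j != 0)%:R.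
  by case: (F2_cases (x 0 j)) => ->; rewrite ?oner_eq0.
exists (x 0 0 != 0), (x 0 1 != 0), (x 0 2%:R != 0), (x 0 3%:R != 0).
by apply/rowP => -[[|[|[|[|//]]]] ?]; rewrite mxE bit; congr ((x 0 _ != 0)%:R); apply: val_inj.
Qed.

Definition rows4 (r0 r1 r2 r3 : 'rV['F_2]_2) : 'M['F_2]_(4, 2) :=
  \matrix_(i < 4) nth 0 [:: r0; r1; r2; r3] i.

Lemma bits4_mul_rows4 a b c d r0 r1 r2 r3 :
  bits4 a b c d *m rows4 r0 r1 r2 r3 = a%:R *: r0 + b%:R *: r1 + c%:R *: r2 + d%:R *: r3.
Proof.
by apply/rowP => j; rewrite !mxE !big_ord_recl big_ord0 addr0 !mxE /= !addrA.
Qed.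

Definition letter_bit0 (l : letter) : bool := if l is Lb then false else true.
Definition letter_bit1 (l : letter) : bool := if l is La then false else true.

Lemma vecOfE l : vecOf l = bits2 (letter_bit0 l) (letter_bit1 l).
Proof. by case: l; apply/rowP => -[[|[|//]] ?]; rewrite !mxE. Qed.

Lemma vecOf_inj : injective vecOf.
Proof. by case; case=> // /eqP; rewrite !vecOfE => /eqP /bits2_inj[]. Qed.

Lemma vecOf_neq0 l : vecOf l != 0.
Proof. by case: l; rewrite vecOfE -bits2_0; apply/eqP => /bits2_inj[]. Qed.

Lemma free_letters (T : finType) (A : {set T}) (l : T -> letter) :
  {in A &, injective l} -> (#|A| <= 2)%N -> free [seq vecOf (l v) | v in A].
Proof.
move=> l_inj cardA; apply: free_F2_small; last by rewrite size_image.
  rewrite map_inj_in_uniq ?enum_uniq // => u v; rewrite !mem_enum => uA vA.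
  by move/vecOf_inj; apply: l_inj.
by apply/imageP => -[v _ /esym/eqP]; rewrite (negbTE (vecOf_neq0 _)).
Qed.

Section PmFaces.
Variable m : nat.

Lemma Pm_face_card (S : {set 'I_m}) : Pm_face S -> (#|S| <= 2)%N.
Proof.
case/orP => [/leq_trans-> // | /existsP[i /eqP->]].
by rewrite cards2; case: (_ != _).
Qed.

Lemma Pm_face_pair (x y : 'I_m) :
  x != y -> Pm_face [set x; y] -> y = ordS x \/ x = ordS y.
Proof.
move=> xy; rewrite /Pm_face cards2 xy /= => /existsP[i /eqP E].
have: x \in [set i; ordS i] by rewrite -E set21.
have: y \in [set i; ordS i] by rewrite -E set22.
by rewrite !inE => /orP[] /eqP ey /orP[] /eqP ex; subst x y; rewrite ?eqxx in xy; auto.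
Qed.

Lemma Pm_nonface_mnf (N : {set 'I_m}) :
  ~~ Pm_face N -> exists2 N' : {set 'I_m}, N' \subset N & Pm_mnf N'.
Proof.
move=> nfN; have [N' /minsetP[nfN' minN'] N'N] :=
  minset_exists (P := fun A : {set 'I_m} => ~~ Pm_face A) nfN.
exists N' => //; rewrite /Pm_mnf nfN'; apply/forall_inP => x xN'.
apply: contraT => /minN'/(_ (subD1set N' x)) eqN'.
by move: xN'; rewrite -eqN' !inE eqxx.
Qed.

End PmFaces.

Section Wedge.
Variables (m : nat) (p q : 'I_m).

Lemma wed_face_expand (s : {set wV p q}) (N : {set 'I_m}) :
  wed_face s -> wexpand p q N \subset s -> Pm_face N.
Proof.
move=> sface Ns; apply: contraT => /Pm_nonface_mnf[N' N'N mnfN'].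
case/negP: sface; apply/existsP; exists N'; rewrite mnfN' /=.
by apply: subset_trans _ Ns; apply/subsetP => w; rewrite !inE => /(subsetP N'N).
Qed.

Lemma wV_p (w : wV p q) : wident w = p -> w = vp p q (sval w).2.
Proof. by case: w => -[v b] ? /= vp_; apply: val_inj; rewrite /= -vp_. Qed.

Lemma wV_q (w : wV p q) : wident w = q -> w = vq p q (sval w).2.
Proof. by case: w => -[v b] ? /= vq_; apply: val_inj; rewrite /= -vq_. Qed.

Lemma wV_snd (w : wV p q) : wident w != p -> wident w != q -> (sval w).2 = false.
Proof.
case: w => -[v b]; rewrite /wident /= => + vp vq.
by rewrite (negbTE vp) (negbTE vq) => /negbTE.
Qed.

Lemma wV_eq (w w' : wV p q) :
  wident w = wident w' -> wident w != p -> wident w != q -> w = w'.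
Proof.
move=> e wp wq; apply: val_inj; rewrite [LHS]surjective_pairing [RHS]surjective_pairing.
by rewrite wV_snd // wV_snd -?e // -[(sval w).1]/(wident w) e.
Qed.

End Wedge.

Definition proj_mx (bp bq : bool) : 'M['F_2]_(4, 2) :=
  rows4 (vecOf La) (vecOf Lb) ((~~ bp)%:R *: vecOf La) ((~~ bq)%:R *: vecOf La).

Lemma bits4_proj a b c d bp bq :
  bits4 a b c d *m proj_mx bp bq = bits2 (a (+) (~~ bp && c) (+) (~~ bq && d)) b.
Proof.
rewrite bits4_mul_rows4 !scalerA -!natr_andb !vecOfE !bits2Z !bits2D /=.
by congr bits2; move: a b c d bp bq => [] [] [] [] [] [].
Qed.

Definition coords23 : 'M['F_2]_(4, 2) := rows4 0 0 (vecOf La) (vecOf Lb).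

Lemma bits4_coords23 a b c d : bits4 a b c d *m coords23 = bits2 c d.
Proof.
rewrite bits4_mul_rows4 !scaler0 !add0r !vecOfE !bits2Z bits2D /=.
by rewrite !andbT !andbF addbF.
Qed.

Section Construction.
Variables (m : nat) (lam1 : 'I_m -> letter) (p q : 'I_m) (phi psi : 'I_m -> bool).
Hypotheses (hlam1 : Pm_char lam1) (hpq : p != q) (hp : lam1 p = La) (hq : lam1 q = La).
Hypotheses (hphi : piece_choice lam1 phi) (hpsi : piece_choice lam1 psi).

Definition wLam (w : wV p q) : 'rV['F_2]_4 :=
  let v := wident w in let l := lam1 v in
  if v == p then bits4 (~~ (sval w).2) false true false
  else if v == q then bits4 (~~ (sval w).2) false false true
  else bits4 (letter_bit0 l) (letter_bit1 l) (phi v && letter_bit1 l) (psi v && letter_bit1 l).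

(* The map at the corner {p_bp, q_bq} of the square, where true stands for index 2. *)
Definition corner_map (bp bq : bool) (v : 'I_m) : letter :=
  if (~~ bp && phi v) (+) (~~ bq && psi v) then inv_letter (lam1 v) else lam1 v.

Lemma corner_char bp bq : Pm_char (corner_map bp bq).
Proof.
move=> i; rewrite /corner_map.
have := @hlam1 i; have := @hphi i; have := @hpsi i.
case: (lam1 i); case: (lam1 (ordS i)) => eq_psi eq_phi neq; try by case: neq.
all: try by do 2 case: ifP.
all: by rewrite -eq_phi -?eq_psi //; case: (_ (+) _).
Qed.

Lemma wLam_vp b : wLam (vp p q b) = bits4 (~~ b) false true false.
Proof. by rewrite /wLam /wident /= eqxx. Qed.

Lemma wLam_vq b : wLam (vq p q b) = bits4 (~~ b) false false true.
Proof. by rewrite /wLam /wident /= eq_sym (negbTE hpq) eqxx. Qed.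

Lemma wLam_proj_vp bp bq : wLam (vp p q bp) *m proj_mx bp bq = 0.
Proof. by rewrite wLam_vp bits4_proj; case: bp; case: bq; rewrite bits2_0. Qed.

Lemma wLam_proj_vq bp bq : wLam (vq p q bq) *m proj_mx bp bq = 0.
Proof. by rewrite wLam_vq bits4_proj; case: bp; case: bq; rewrite bits2_0. Qed.

Lemma wLam_proj bp bq (w : wV p q) : w != vp p q bp -> w != vq p q bq ->
  wLam w *m proj_mx bp bq = vecOf (corner_map bp bq (wident w)).
Proof.
have [wp|wp] := eqVneq (wident w) p.
  rewrite (wV_p wp) wLam_vp bits4_proj /corner_map /wident /= hp if_same => + _.
  by rewrite vecOfE andbF; case: (sval w).2; case: bp; rewrite ?eqxx.
have [wq|wq] := eqVneq (wident w) q.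
  rewrite (wV_q wq) wLam_vq bits4_proj /corner_map /wident /= hq if_same => _.
  by rewrite vecOfE andbF; case: (sval w).2; case: bq; rewrite ?eqxx.
rewrite /wLam (negbTE wp) (negbTE wq) bits4_proj /corner_map vecOfE => _ _.
by case: (lam1 _); case: (phi _); case: (psi _); case: bp; case: bq.
Qed.

Lemma free_wLam_pq bp bq (A : {set wV p q}) :
  A \subset [set vp p q bp; vq p q bq] -> free [seq wLam v | v in A].
Proof.
move=> Apq; apply: (free_of_image (f := linfun (mulmxr coords23))).
have -> : [seq linfun (mulmxr coords23) (wLam v) | v in A] =
    [seq vecOf (if wident v == p then La else Lb) | v in A].
  apply/eq_in_map => v; rewrite mem_enum lfunE /= => /(subsetP Apq).
  rewrite !inE => /orP[] /eqP->; rewrite ?wLam_vp ?wLam_vq bits4_coords23 vecOfE /wident /=.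
    by rewrite eqxx.
  by rewrite eq_sym (negbTE hpq).
apply: free_letters; last first.
  by rewrite (leq_trans (subset_leq_card Apq)) // cards2; case: (_ != _).
move=> u v /(subsetP Apq) + /(subsetP Apq); rewrite !inE.
by move=> /orP[] /eqP-> /orP[] /eqP->; rewrite /wident /= ?eqxx // eq_sym (negbTE hpq).
Qed.

Section FaceFree.
Variable s : {set wV p q}.
Let bp := vp p q true \in s.
Let bq := vq p q true \in s.
Let C := [set vp p q bp; vq p q bq].

(* C is chosen so that a vertex of s :\: C over p (or q) forces both copies into s. *)

Lemma outside_vp v : v \in s :\: C -> wident v = p -> v = vp p q false /\ vp p q true \in s.
Proof.
rewrite !inE negb_or -andbA => /and3P[vbp _ vs] vp_.
move: vs vbp; rewrite /bp (wV_p vp_); case: (sval v).2 => vs; first by rewrite vs eqxx.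
by case: (vp p q true \in s); rewrite ?eqxx.
Qed.

Lemma outside_vq v : v \in s :\: C -> wident v = q -> v = vq p q false /\ vq p q true \in s.
Proof.
rewrite !inE negb_or -andbA => /and3P[_ vbq vs] vq_.
move: vs vbq; rewrite /bq (wV_q vq_); case: (sval v).2 => vs; first by rewrite vs eqxx.
by case: (vq p q true \in s); rewrite ?eqxx.
Qed.

Lemma outside_fibre v w : v \in s :\: C -> wident w = wident v -> w \in s.
Proof.
move=> vD wv; have vs : v \in s by case/setDP: vD.
have [vp_|vp_] := eqVneq (wident v) p.
  have [vE ps] := outside_vp vD vp_; rewrite vE in vs.
  by rewrite (wV_p (etrans wv vp_)); case: (sval w).2.
have [vq_|vq_] := eqVneq (wident v) q.
  have [vE qs] := outside_vq vD vq_; rewrite vE in vs.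
  by rewrite (wV_q (etrans wv vq_)); case: (sval w).2.
by rewrite (wV_eq wv) // wv.
Qed.

Lemma outside_wident_inj : {in s :\: C &, injective (@wident m p q)}.
Proof.
move=> v w vD wD e.
have [vp_|vp_] := eqVneq (wident v) p.
  by rewrite (outside_vp vD vp_).1 (outside_vp wD (etrans (esym e) vp_)).1.
have [vq_|vq_] := eqVneq (wident v) q.
  by rewrite (outside_vq vD vq_).1 (outside_vq wD (etrans (esym e) vq_)).1.
exact: wV_eq.
Qed.

Lemma free_proj_outside : wed_face s ->
  free [seq linfun (mulmxr (proj_mx bp bq)) (wLam v) | v in s :\: C].
Proof.
move=> sface; set D := s :\: C.
have fibre_face (N : {set 'I_m}) : N \subset [set wident v | v in D] -> Pm_face N.
  move=> ND; apply: (wed_face_expand sface); apply/subsetP => w; rewrite inE.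
  by case/(subsetP ND)/imsetP => v vD /(outside_fibre vD).
have -> : [seq linfun (mulmxr (proj_mx bp bq)) (wLam v) | v in D] =
    [seq vecOf (corner_map bp bq (wident v)) | v in D].
  apply/eq_in_map => v; rewrite mem_enum lfunE /= => /setDP[_].
  by rewrite !inE negb_or => /andP[vp_ vq_]; apply: wLam_proj.
apply: free_letters; last first.
  by rewrite -(card_in_imset outside_wident_inj) Pm_face_card // fibre_face.
move=> u v uD vD; apply: contraPeq => uv.
have wuv : wident u != wident v by apply: contra uv => /eqP/(outside_wident_inj uD vD)->.
have /(Pm_face_pair wuv) adj : Pm_face [set wident u; wident v].
  by apply: fibre_face; apply/subsetP => x; rewrite !inE => /orP[] /eqP->; apply: imset_f.
by case: adj => ->; [|apply: nesym]; apply: corner_char.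
Qed.

Lemma wLam_free : wed_face s -> free [seq wLam v | v in s].
Proof.
move=> sface; apply: (free_split_ker (f := linfun (mulmxr (proj_mx bp bq))) (C := C)).
- move=> v /setIP[_]; rewrite lfunE /= !inE => /orP[] /eqP->.
    exact: wLam_proj_vp.
  exact: wLam_proj_vq.
- exact/free_wLam_pq/subsetIr.
- exact: free_proj_outside.
Qed.

End FaceFree.

Lemma lker_proj bp bq :
  lker (linfun (mulmxr (proj_mx bp bq))) =
  <<[seq wLam v | v in [set vp p q bp; vq p q bq]]>>%VS.
Proof.
apply/eqP; rewrite eqEsubv; apply/andP; split.
  apply/subvP => x; rewrite memv_ker lfunE /=.
  have [a [b [c [d ->]]]] := bits4P x.
  rewrite bits4_proj -bits2_0 => /eqP/bits2_inj[ha ->].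
  have -> : bits4 a false c d = c%:R *: wLam (vp p q bp) + d%:R *: wLam (vq p q bq).
    rewrite wLam_vp wLam_vq !bits4Z bits4D; move: ha.
    by case: a; case: c; case: d; case: bp; case: bq.
  by apply: memvD; apply: memvZ; apply: memv_span; apply: image_f; rewrite !inE eqxx ?orbT.
apply/span_subvP => y /imageP[v]; rewrite !inE => /orP[] /eqP-> ->; rewrite memv_ker lfunE /=.
  by rewrite wLam_proj_vp.
by rewrite wLam_proj_vq.
Qed.

Lemma wLam_proj_DJ bp bq (lam : 'I_m -> letter) :
  corner_map bp bq =1 lam -> proj_DJ wLam [set vp p q bp; vq p q bq] lam.
Proof.
move=> lamE; exists (linfun (mulmxr (proj_mx bp bq))); split; first exact: lker_proj.
move=> w /andP[ws _]; rewrite lfunE /= -lamE.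
by apply: wLam_proj; apply: contraNneq ws => ->; rewrite !inE eqxx ?orbT.
Qed.

End Construction.

Theorem mainTheorem4 (m : nat) (hm : (3 <= m)%N) (lam1 : 'I_m -> letter)
  (hlam1 : Pm_char lam1) (p q : 'I_m) (hpq : p != q)
  (hp : lam1 p = La) (hq : lam1 q = La)
  (phi psi : 'I_m -> bool)
  (hphi : piece_choice lam1 phi) (hpsi : piece_choice lam1 psi) :
  let lam2 := apply_choice lam1 phi in
  let lam3 := apply_choice lam1 psi in
  let lam4 := apply_choice lam2 psi in
  exists Lam : wV p q -> 'rV['F_2]_4,
    wed_char Lam /\
    proj_DJ Lam [set vp p q true; vq p q true] lam1 /\
    proj_DJ Lam [set vp p q false; vq p q true] lam2 /\
    proj_DJ Lam [set vp p q true; vq p q false] lam3 /\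
    proj_DJ Lam [set vp p q false; vq p q false] lam4.
Proof.
move=> lam2 lam3 lam4; exists (@wLam m lam1 p q phi psi).
have corner_DJ := wLam_proj_DJ hpq hp hq.
split; first by move=> s; apply: wLam_free.
split; first by apply: corner_DJ => v.
split; first by apply: corner_DJ => v; rewrite /corner_map /lam2 /apply_choice addbF.
split; first by apply: corner_DJ => v.
apply: corner_DJ => v; rewrite /corner_map /lam4 /lam2 /apply_choice /=.
by case: (phi v); case: (psi v); case: (lam1 v).
Qed.
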